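(* Let $\kappa_1>0$, $\kappa_2>0$ and $C\ge0$. Let $f$ be a nonnegative continuous function on $(0,1]$ such that $\int_0^1 f<+\infty$. Assume that $G:[0,1]\to[0,+\infty)$ is continuous on $[0,1]$, of class $\mathcal{C}^1$ on $(0,1]$, and satisfies on $(0,1]$ the differential inequality $$G'(t)\le Ct^{\kappa_1-1}G(t)+f(t)\sqrt{G(t)}+Ct^{\kappa_2-1},\qquad G(0)=0.$$ Then for all $t\in[0,1]$, $$G(t)\lesssim\Big(\int_0^t f\Big)^2+t^{\kappa_2},$$ where the implicit constant depends only on $\kappa_1,\kappa_2,C$. *)

From HB Require Import structures.
From mathcomp Require Import all_boot all_order all_algebra.
From mathcomp Require Import all_classical all_reals all_analysis.
Set Implicit Arguments. Unset Strict Implicit. Unset Printing Implicit Defensive.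

From HB Require Import structures.
From mathcomp Require Import all_boot all_order all_algebra.
From mathcomp Require Import all_classical all_reals all_analysis.
From mathcomp Require Import ring lra measurable_realfun.
Set Implicit Arguments. Unset Strict Implicit. Unset Printing Implicit Defensive.
Import Order.TTheory GRing.Theory Num.Theory.
Import numFieldNormedType.Exports.
Local Open Scope classical_set_scope.
Local Open Scope ring_scope.

(* With the integrating factor w(t) = exp(-(C/k1) t^k1) and F(t) = int_0^t f, the function
   w G - sqrt(M) F - (C/k2) t^k2 is nonincreasing on every interval where G <= M, because
   w <= 1 and f sqrt(G) <= f sqrt(M).  Let M = G(c) be the maximum of G on [0, t]: comparing
   this function at c and near 0, where G vanishes, and using w >= exp(-C/k1) gives
   M <= L (sqrt(M) F(t) + (C/k2) t^k2) with L = exp(C/k1).  This is a quadratic inequality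
   in sqrt(M), whence M <= L^2 F(t)^2 + 2 L (C/k2) t^k2.  The endpoint t = 1 follows by
   continuity of G. *)

Lemma sqr_le_linear (R : realFieldType) (a b y : R) :
  y ^+ 2 <= a * y + b -> y ^+ 2 <= a ^+ 2 + 2 * b.
Proof. by have := sqr_ge0 (y - a); nra. Qed.

Lemma powR_le1 (R : realType) (a r : R) : 0 <= a <= 1 -> 0 <= r -> a `^ r <= 1.
Proof.
move=> /andP[a0 a1] r0.
by have := ge0_ler_powR r0 (x := a) (y := 1); rewrite powR1 !nnegrE; apply.
Qed.

Definition bound_const {R : realType} (k1 k2 C : R) : R :=
  expR (C / k1) ^+ 2 + 2 * expR (C / k1) * (C / k2).

Lemma bound_const_gt0 {R : realType} (k1 k2 C : R) :
  0 < k2 -> 0 <= C -> 0 < bound_const k1 k2 C.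
Proof.
move=> k2_gt0 C_ge0; apply: ltr_wpDr (exprn_gt0 _ (expR_gt0 _)).
by apply: mulr_ge0; [apply: mulr_ge0 => //; exact: expR_ge0 | rewrite divr_ge0 // ltW].
Qed.

Section comparison.
Variables (R : realType) (k1 k2 C : R) (f G : R -> R).
Local Notation mu := (@lebesgue_measure R).
Local Notation F t := (\int[mu]_(x in `]0, t]) f x).

Hypotheses (k1_gt0 : 0 < k1) (k2_gt0 : 0 < k2) (C_ge0 : 0 <= C).
Hypothesis f_cont : {within `]0, 1], continuous f}.
Hypothesis f_ge0 : forall t, 0 < t <= 1 -> 0 <= f t.
Hypothesis f_int : (\int[mu]_(x in `]0%R, 1%R]) (f x)%:E < +oo)%E.
Hypothesis G_cont : {within `[0, 1], continuous G}.
Hypothesis G_ge0 : forall t, 0 <= t <= 1 -> 0 <= G t.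
Hypothesis G0 : G 0 = 0.
Hypothesis G_der : forall t, 0 < t < 1 -> derivable G t 1.
Hypothesis G'_le : forall t, 0 < t < 1 ->
  derive1 G t <= C * t `^ (k1 - 1) * G t + f t * Num.sqrt (G t)
                 + C * t `^ (k2 - 1).

Lemma f_integrable : mu.-integrable `]0, 1] (EFin \o f).
Proof.
apply/integrableP; split.
  by apply/measurable_EFinP; exact: subspace_continuous_measurable_fun.
rewrite (_ : (\int[mu]_(x in _) _ = \int[mu]_(x in `]0%R, 1%R]) (f x)%:E)%E) //.
by apply: eq_integral => x; rewrite inE /= in_itv /= => /f_ge0 fx; rewrite ger0_norm.
Qed.

Lemma F_ge0 (t : R) : t <= 1 -> 0 <= F t.
Proof.
move=> t1; apply: Rintegral_ge0 => x; rewrite /= in_itv /= => /andP[x0 xt].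
by apply: f_ge0; rewrite x0 (le_trans xt).
Qed.

Lemma F_le (s t : R) : s <= t -> t <= 1 -> F s <= F t.
Proof.
move=> st t1.
have sub_st : `]0, s] `<=` `]0, t] by apply: subset_itv; rewrite bnd_simp.
have sub_t1 : `]0, t] `<=` `]0, 1] by apply: subset_itv; rewrite bnd_simp.
have int_t : mu.-integrable `]0, t] (EFin \o f) by exact: integrableS f_integrable.
have int_s : mu.-integrable `]0, s] (EFin \o f) by exact: integrableS int_t.
apply: fine_le; [exact: integrable_fin_num int_s | exact: integrable_fin_num int_t |].
apply: ge0_subset_integral => //; first by case/integrableP: int_t.
move=> x /sub_t1; rewrite /= in_itv /= => /f_ge0; by rewrite lee_fin.
Qed.

Lemma F_derive (x : R) : 0 < x < 1 -> is_derive x 1 (fun t => F t) (f x).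
Proof.
move=> /andP[x0 x1].
have f_contx : {for x, continuous f}.
  have : {in `]0, 1[%classic, continuous f}.
    rewrite -continuous_open_subspace; last exact: interval_open.
    by apply: continuous_subspaceW f_cont; apply: subset_itv; rewrite bnd_simp.
  by apply; rewrite inE /= in_itv /= x0.
have [dF F'x] := continuous_FTC1 x1 f_integrable x0 f_contx.
by have := derivableP dF; rewrite -derive1E F'x.
Qed.

Let w (t : R) : R := expR (- (C / k1) * t `^ k1).

Lemma w_le1 (t : R) : w t <= 1.
Proof.
rewrite expR_le1 mulNr oppr_le0.
by apply: mulr_ge0; [rewrite divr_ge0 // ltW | exact: powR_ge0].
Qed.

Lemma w_ge (t : R) : 0 <= t <= 1 -> expR (- (C / k1)) <= w t.
Proof.
move=> t01; rewrite ler_expR mulNr lerN2.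
by apply: ler_piMr; [rewrite divr_ge0 // ltW | exact/powR_le1/ltW].
Qed.

Lemma w_derive (x : R) : 0 < x -> is_derive x 1 w (- (C * x `^ (k1 - 1)) * w x).
Proof.
move=> x0; apply: is_derive_eq.
  exact: is_derive1_comp (is_derive_expR _) (is_deriveZ _ (is_derive1_powR k1 x0)).
by rewrite /GRing.scale /= /w mulrC; congr (_ * _); field; rewrite gt_eqF.
Qed.

Let Phi (m t : R) : R := w t * G t - m * F t - C / k2 * t `^ k2.

Let Phi' (m x : R) : R :=
  w x * (derive1 G x - C * x `^ (k1 - 1) * G x) - m * f x - C * x `^ (k2 - 1).

Lemma Phi_derive (m x : R) : 0 < x < 1 -> is_derive x 1 (Phi m) (Phi' m x).
Proof.
move=> /[dup] x01 /andP[x0 _].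
have G'x : is_derive x 1 G (derive1 G x) by rewrite derive1E; exact/derivableP/G_der.
have := is_deriveB (is_deriveB (is_deriveM (w_derive x0) G'x) (is_deriveZ m (F_derive x01)))
                   (is_deriveZ (C / k2) (is_derive1_powR k2 x0)).
case=> dPhi Phi'x; apply: DeriveDef; first exact: dPhi.
apply: etrans; first exact: Phi'x.
by rewrite /GRing.scale /= /Phi'; field; rewrite gt_eqF.
Qed.

Lemma Phi'_le0 (M x : R) : 0 < x < 1 -> G x <= M -> Phi' (Num.sqrt M) x <= 0.
Proof.
move=> /[dup] x01 /andP[x0 x1] GxM.
have fx0 : 0 <= f x by apply: f_ge0; rewrite x0 ltW.
have Gx0 : 0 <= G x by apply: G_ge0; rewrite !ltW.
have source_ge0 : 0 <= f x * Num.sqrt (G x) + C * x `^ (k2 - 1).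
  by apply: addr_ge0; apply: mulr_ge0; rewrite ?sqrtr_ge0 ?powR_ge0.
have sqrt_le : f x * Num.sqrt (G x) <= f x * Num.sqrt M.
  by apply: ler_wpM2l => //; rewrite ler_sqrt // (le_trans Gx0).
have w_slope : w x * (derive1 G x - C * x `^ (k1 - 1) * G x)
    <= w x * (f x * Num.sqrt (G x) + C * x `^ (k2 - 1)).
  by apply: ler_wpM2l; [exact: expR_ge0 | have := G'_le x01; lra].
have := ler_piMl source_ge0 (w_le1 x); rewrite /Phi'; lra.
Qed.

Lemma Phi_nonincreasing (M a s : R) : 0 < a -> a <= s -> s < 1 ->
  (forall x, a <= x <= s -> G x <= M) ->
  Phi (Num.sqrt M) s <= Phi (Num.sqrt M) a.
Proof.
move=> a0 a_s s1 GM.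
have as01 x : a <= x <= s -> 0 < x < 1.
  by move=> /andP[ax xs]; rewrite (lt_le_trans a0 ax) (le_lt_trans xs s1).
have itv_as x : x \in `]a, s[ -> a <= x <= s.
  by rewrite in_itv /= => /andP[/ltW -> /ltW ->].
have [a_in s_in] : a \in `[a, s] /\ s \in `[a, s] by split; rewrite in_itv /= lexx a_s.
apply: (ler0_derive1_le_cc (f := Phi (Num.sqrt M)) _ _ _ s_in a_in a_s).
- by move=> x /itv_as /as01 /(Phi_derive (Num.sqrt M))[].
- move=> x /itv_as xas; rewrite derive1E; have [_ ->] := Phi_derive (Num.sqrt M) (as01 _ xas).
  exact: Phi'_le0 (as01 _ xas) (GM _ xas).
- apply: derivable_within_continuous => x; rewrite in_itv /= => /as01 x01.
  by case: (Phi_derive (Num.sqrt M) x01).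
Qed.

Lemma weighted_G_le (M s : R) : 0 < s < 1 -> (forall x, 0 < x <= s -> G x <= M) ->
  w s * G s <= Num.sqrt M * F s + C / k2 * s `^ k2.
Proof.
move=> /andP[s0 s1] GM.
have G_cvg0 : G a @[a --> 0^'+] --> 0.
  by have [_ + _] := (continuous_within_itvP G ltr01).1 G_cont; rewrite G0.
rewrite -[leRHS]add0r; apply: (ler_cvg_to (cvg_cst _) (cvgD G_cvg0 (cvg_cst _))).
near=> a.
have a0 : 0 < a by near: a; exact: nbhs_right_gt.
have a_s : a <= s by near: a; exact: nbhs_right_le.
have a01 : 0 <= a <= 1 by rewrite ltW // (le_trans a_s) // ltW.
have GM' x : a <= x <= s -> G x <= M.
  by move=> /andP[ax xs]; rewrite GM // (lt_le_trans a0 ax) xs.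
have := Phi_nonincreasing a0 a_s s1 GM'.
have := ler_piMl (G_ge0 a01) (w_le1 a).
have := mulr_ge0 (sqrtr_ge0 M) (F_ge0 (andP a01).2).
have := mulr_ge0 (divr_ge0 C_ge0 (ltW k2_gt0)) (powR_ge0 a k2).
rewrite /Phi addrfctE; lra.
Unshelve. all: by end_near.
Qed.

Lemma G_bound_lt1 (t : R) : 0 < t < 1 ->
  G t <= bound_const k1 k2 C * (F t ^+ 2 + t `^ k2).
Proof.
move=> /andP[t0 t1].
have G_cont0t : {within `[0, t], continuous G}.
  by apply: continuous_subspaceW G_cont; apply: subset_itv; rewrite bnd_simp // ltW.
have [c] := EVT_max (ltW t0) G_cont0t; rewrite in_itv /= => /andP[c0 ct] G_max.
have Gt_le : G t <= G c by apply: G_max; rewrite in_itv /= lexx ltW.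
have M0 : 0 <= G c by apply: G_ge0; rewrite c0 (le_trans ct) ?ltW.
rewrite /bound_const; set L := expR (C / k1); set D := C / k2.
have L0 : 0 <= L := expR_ge0 _.
have D0 : 0 <= D by rewrite divr_ge0 // ltW.
have Ft0 : 0 <= F t by rewrite F_ge0 // ltW.
have T0 : 0 <= t `^ k2 := powR_ge0 _ _.
have Mc : G c <= L * (Num.sqrt (G c) * F t + D * t `^ k2).
  have [c_eq0|c_gt0] : 0 = c \/ 0 < c by apply/predU1P; rewrite -le_eqVlt.
    rewrite -c_eq0 G0; apply: mulr_ge0 L0 (addr_ge0 (mulr_ge0 _ Ft0) (mulr_ge0 D0 T0)).
    exact: sqrtr_ge0.
  have c01 : 0 < c < 1 by rewrite c_gt0 (le_lt_trans ct t1).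
  have Gc_max x : 0 < x <= c -> G x <= G c.
    by move=> /andP[x0 xc]; apply: G_max; rewrite in_itv /= ltW // (le_trans xc ct).
  have wc := weighted_G_le c01 Gc_max; rewrite -/D in wc.
  have Lw : 1 <= L * w c.
    rewrite -(expRxMexpNx_1 (C / k1)) -/L; apply: ler_wpM2l => //.
    by apply: w_ge; rewrite c0 (le_trans ct) // ltW.
  have Fc : F c <= F t := F_le ct (ltW t1).
  have pc : c `^ k2 <= t `^ k2 by apply: ge0_ler_powR => //; rewrite ?nnegrE ltW.
  have := ler_wpM2r M0 Lw; rewrite mul1r => /le_trans; apply.
  rewrite -mulrA; apply: ler_wpM2l => //; apply: le_trans wc _.
  by apply: lerD; apply: ler_wpM2l => //; exact: sqrtr_ge0.
have Mc' : Num.sqrt (G c) ^+ 2 <= L * F t * Num.sqrt (G c) + L * (D * t `^ k2).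
  by rewrite sqr_sqrtr //; lra.
move/sqr_le_linear: Mc'; rewrite sqr_sqrtr // => M_le.
have := mulr_ge0 (mulr_ge0 L0 L0) T0; have := mulr_ge0 (mulr_ge0 L0 D0) (sqr_ge0 (F t)).
nra.
Qed.

Lemma G_bound (t : R) : 0 <= t <= 1 ->
  G t <= bound_const k1 k2 C * (F t ^+ 2 + t `^ k2).
Proof.
move=> /andP[t0 t1].
have K0 : 0 <= bound_const k1 k2 C by exact/ltW/bound_const_gt0.
have [t_eq0|t_gt0] : 0 = t \/ 0 < t by apply/predU1P; rewrite -le_eqVlt.
  by rewrite -t_eq0 G0; apply: mulr_ge0 K0 (addr_ge0 (sqr_ge0 _) (powR_ge0 _ _)).
have [->|t_lt1] : t = 1 \/ t < 1 by apply/predU1P; rewrite -le_eqVlt.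
  2: by apply: G_bound_lt1; rewrite t_gt0.
have G_cvg1 : G s @[s --> 1^'-] --> G 1.
  by have [_ _] := (continuous_within_itvP G ltr01).1 G_cont.
apply: (ler_cvg_to G_cvg1 (cvg_cst _)); near=> s.
have s0 : 0 < s by near: s; exact: nbhs_left_gt.
have s1 : s < 1 by near: s; exact: nbhs_left_lt.
have s01 : 0 < s < 1 by rewrite s0.
apply: le_trans (G_bound_lt1 s01) _; rewrite powR1.
apply: ler_wpM2l => //; apply: lerD; last by apply: powR_le1; rewrite ?ltW.
by rewrite ler_sqr ?nnegrE ?F_ge0 ?F_le // ltW.
Unshelve. all: by end_near.
Qed.

End comparison.

Theorem lemma2p2 (R : realType) (k1 k2 C : R)
  (hk1 : 0 < k1) (hk2 : 0 < k2) (hC : 0 <= C) :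
  exists K : R, 0 < K /\
  forall (f G : R -> R),
    {within `]0, 1], continuous f} ->
    (forall t, 0 < t <= 1 -> 0 <= f t) ->
    (\int[lebesgue_measure]_(x in `]0%R, 1%R]) (f x)%:E < +oo)%E ->
    {within `[0, 1], continuous G} ->
    (forall t, 0 <= t <= 1 -> 0 <= G t) ->
    G 0 = 0 ->
    (forall t, 0 < t < 1 -> derivable G t 1) ->
    {within `]0, 1[, continuous (derive1 G)} ->
    (forall t, 0 < t < 1 ->
       derive1 G t <= C * t `^ (k1 - 1) * G t + f t * Num.sqrt (G t)
                  + C * t `^ (k2 - 1)) ->
    forall t, 0 <= t <= 1 ->
      G t <= K * ((fine (\int[lebesgue_measure]_(x in `]0%R, t]) (f x)%:E)) ^+ 2
                  + t `^ k2).
Proof.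
exists (bound_const k1 k2 C); split; first exact: bound_const_gt0.
move=> f G f_cont f_ge0 f_int G_cont G_ge0 G0 G_der _ G'_le t t01.
exact: G_bound.
Qed.
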